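(* Let $\mathcal P_X$ and $\mathcal P_Y$ be probability measures on a common measurable space $(E,\mathcal E)$ with $\mathcal P_Y\ll\mathcal P_X$, and let $L=d\mathcal P_Y/d\mathcal P_X$ be the Radon–Nikodym derivative. Assume that $L(\mathbf Z)$ has a continuous distribution when $\mathbf Z\sim\mathcal P_X$. Let $\mathbf Z_X\sim\mathcal P_X$ and $\mathbf Z_Y\sim\mathcal P_Y$ be independent. Then $$\tfrac12\, d_{tv}(\mathcal P_X,\mathcal P_Y)\;\le\;\mathbb P\big(L(\mathbf Z_X)<L(\mathbf Z_Y)\big)-\tfrac12\;\le\; d_{tv}(\mathcal P_X,\mathcal P_Y).$$
   Context: $d_{tv}(\mathcal P_X,\mathcal P_Y)=\sup_{A\in\mathcal E}|\mathcal P_Y(A)-\mathcal P_X(A)|$ denotes the total variation distance. *)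

From HB Require Import structures.
From mathcomp Require Import all_boot all_order all_algebra.
From mathcomp Require Import all_classical all_reals all_analysis.
Set Implicit Arguments. Unset Strict Implicit. Unset Printing Implicit Defensive.
Import Order.TTheory GRing.Theory Num.Theory.
Local Open Scope classical_set_scope.
Local Open Scope ring_scope.
Local Open Scope ereal_scope.

Definition dtv (d : measure_display) (T : measurableType d) (R : realType)
  (PX PY : probability T R) : \bar R :=
  ereal_sup [set `|PY A - PX A| | A in [set A : set T | measurable A]].

From HB Require Import structures.
From mathcomp Require Import all_boot all_order all_algebra.
From mathcomp Require Import all_classical all_reals all_analysis.
From mathcomp Require Import ring lra measurable_realfun.
Import Order.TTheory GRing.Theory Num.Theory.
Local Open Scope classical_set_scope.
Local Open Scope ring_scope.
Local Open Scope ereal_scope.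

(* Let G := E[(L(Z') - L(Z))^+] for independent Z, Z' ~ P_X. Since P_Y = L.P_X,
   P(L(Z_X) < L(Z_Y)) = E[1{L Z < L Z'} L(Z')]. Adding the same integral with L(Z)
   in place of L(Z') gives 1 by exchangeability, because ties are null (continuity
   of the law of L); their difference is G, so the probability is (1 + G)/2.
   On the other side d_tv = E(L - 1)^+ = E(1 - L)^+. The pointwise bound
   (b - a)^+ <= (b - 1)^+ + (1 - a)^+ gives G <= 2 d_tv, and Jensen in Z,
   (L(z') - 1)^+ <= E(L(z') - L(Z))^+, gives d_tv <= G. *)

Section positive_part.
Context {R : realFieldType}.
Implicit Types a b c : R.
Local Open Scope ring_scope.

Lemma maxr0_ge0 a : 0 <= Num.max a 0.
Proof. by rewrite le_max lexx orbT. Qed.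

Lemma maxrB0_addr a b : Num.max (a - b) 0 + b = a + Num.max (b - a) 0.
Proof. by case: (ger0P (a - b)); case: (ger0P (b - a)) => h1 h2; lra. Qed.

Lemma le_maxrB0_addr a b : a <= Num.max (a - b) 0 + b.
Proof. by case: (ger0P (a - b)) => h; lra. Qed.

Lemma maxrB0E a b : Num.max (b - a) 0 = ((a < b)%R)%:R * (b - a).
Proof.
case: ltP => h; first by rewrite mul1r max_l // subr_ge0 ltW.
by rewrite mul0r max_r // subr_le0.
Qed.

Lemma maxrB0_le_add a b c : Num.max (a - c) 0 <= Num.max (a - b) 0 + Num.max (b - c) 0.
Proof.
by case: (ger0P (a - c)); case: (ger0P (a - b)); case: (ger0P (b - c)) => h1 h2 h3; lra.
Qed.

End positive_part.

Lemma measurable_maxrB0 {d} {T : measurableType d} {R : realType} (f g : T -> R) :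
  measurable_fun setT f -> measurable_fun setT g ->
  measurable_fun setT (fun x => Num.max (f x - g x) 0)%R.
Proof.
by move=> mf mg; apply: measurable_maxr; [exact: measurable_funB|exact: measurable_cst].
Qed.

Lemma measurable_set_ltr {d} {T : measurableType d} {R : realType} (f g : T -> R) :
  measurable_fun setT f -> measurable_fun setT g -> measurable [set x | (f x < g x)%R].
Proof.
move=> mf mg; rewrite -[X in measurable X]setTI.
exact: (measurable_fun_ltr mf mg measurableT (Y := [set true])).
Qed.

Section nonnegative_real_integrals.
Context {d} {T : measurableType d} {R : realType} (mu : {measure set T -> \bar R}).

Lemma ge0_integralD_EFin [D : set T] [f g : T -> R] : measurable D ->
  measurable_fun setT f -> measurable_fun setT g ->
  (forall x, 0 <= f x)%R -> (forall x, 0 <= g x)%R ->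
  \int[mu]_(x in D) (f x + g x)%:E =
  \int[mu]_(x in D) (f x)%:E + \int[mu]_(x in D) (g x)%:E.
Proof.
move=> mD mf mg f0 g0; under eq_integral do rewrite EFinD.
apply: ge0_integralD => //.
- by move=> x _; rewrite lee_fin.
- exact/measurable_EFinP/measurable_funTS.
- by move=> x _; rewrite lee_fin.
- exact/measurable_EFinP/measurable_funTS.
Qed.

Lemma ge0_le_integralD [D : set T] [f g h : T -> R] : measurable D ->
  measurable_fun setT f -> measurable_fun setT g -> measurable_fun setT h ->
  (forall x, 0 <= f x)%R -> (forall x, 0 <= g x)%R -> (forall x, 0 <= h x)%R ->
  (forall x, D x -> f x <= g x + h x)%R ->
  \int[mu]_(x in D) (f x)%:E <= \int[mu]_(x in D) (g x)%:E + \int[mu]_x (h x)%:E.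
Proof.
move=> mD mf mg mh f0 g0 h0 fgh.
apply: (@le_trans _ _ (\int[mu]_(x in D) (g x + h x)%:E)).
  apply: (ge0_le_integral mu mD).
  - by move=> x _; rewrite lee_fin.
  - exact/measurable_EFinP/measurable_funTS.
  - exact/measurable_EFinP/measurable_funTS/measurable_funD.
  - by move=> x Dx; rewrite lee_fin fgh.
rewrite ge0_integralD_EFin //; apply: leeD2l; apply: ge0_subset_integral => //.
- exact/measurable_EFinP.
- by move=> x _; rewrite lee_fin.
Qed.

End nonnegative_real_integrals.

Section fubini_tonelli_real.
Context {d1 d2} {T1 : measurableType d1} {T2 : measurableType d2} {R : realType}.
Variables (m1 : {sigma_finite_measure set T1 -> \bar R})
  (m2 : {sigma_finite_measure set T2 -> \bar R}) (f : T1 * T2 -> R).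
Hypotheses (mf : measurable_fun setT f) (f_ge0 : forall z, (0 <= f z)%R).

Let mfE : measurable_fun setT (fun z => (f z)%:E).
Proof. exact/measurable_EFinP. Qed.

Let fE_ge0 z : 0 <= (f z)%:E.
Proof. by rewrite lee_fin. Qed.

Lemma fubini_tonelli1_EFin :
  \int[m1 \x m2]_z (f z)%:E = \int[m1]_x \int[m2]_y (f (x, y))%:E.
Proof. exact: fubini_tonelli1. Qed.

Lemma fubini_tonelli2_EFin :
  \int[m1 \x m2]_z (f z)%:E = \int[m2]_y \int[m1]_x (f (x, y))%:E.
Proof. exact: fubini_tonelli2. Qed.

Lemma measurable_integral_fst_EFin :
  measurable_fun setT (fun y => \int[m1]_x (f (x, y))%:E).
Proof. exact: (measurable_fun_fubini_tonelli_G (m1 := m1) _ mfE fE_ge0). Qed.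

End fubini_tonelli_real.

Section probability_density.
Context {d} {T : measurableType d} {R : realType}.
Variables (P : probability T R) (L : T -> R).

Definition density_excess := \int[P]_x (Num.max (L x - 1) 0)%:E.

Definition density_gap := \int[P \x P]_z (Num.max (L z.2 - L z.1) 0)%:E.

Hypotheses (mL : measurable_fun setT L) (L_ge0 : forall x, (0 <= L x)%R)
  (integral_L : \int[P]_x (L x)%:E = 1).

Lemma integral_cst_probability (c : \bar R) : \int[P]_x c = c.
Proof.
by rewrite (integral_cst P measurableT c) -[RHS]mule1; congr (_ * _); exact: probability_setT.
Qed.

Let mL1 : measurable_fun setT (fun x => Num.max (L x - 1) 0)%R.
Proof. exact/measurable_maxrB0/measurable_cst. Qed.

Let m1L : measurable_fun setT (fun x => Num.max (1 - L x) 0)%R.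
Proof. exact/measurable_maxrB0/mL/measurable_cst. Qed.

Lemma density_excess_deficit :
  density_excess = \int[P]_x (Num.max (1 - L x) 0)%:E.
Proof.
have : \int[P]_x (Num.max (L x - 1) 0 + 1)%:E =
       \int[P]_x (L x + Num.max (1 - L x) 0)%:E.
  by apply: eq_integral => x _; rewrite maxrB0_addr.
rewrite !ge0_integralD_EFin //; [|by move=> x; exact: maxr0_ge0..].
rewrite integral_L integral_cst_probability => /(congr1 (fun t => t - 1)).
by rewrite addeK // [1 + _]addeC addeK.
Qed.

Lemma density_excess_ge0 : 0 <= density_excess.
Proof. by apply: integral_ge0 => x _; rewrite lee_fin maxr0_ge0. Qed.

Lemma density_excess_fin_num : density_excess \is a fin_num.
Proof.
rewrite ge0_fin_numE ?density_excess_ge0 // (@le_lt_trans _ _ 1) ?ltey //.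
rewrite -integral_L; apply: ge0_le_integral => //.
- by move=> x _; rewrite lee_fin maxr0_ge0.
- exact/measurable_EFinP.
- exact/measurable_EFinP.
- by move=> x _; rewrite lee_fin ge_max L_ge0 lerBlDr lerDl ler01.
Qed.

Let mgap : measurable_fun setT (fun z : T * T => Num.max (L z.2 - L z.1) 0)%R.
Proof. by apply: measurable_maxrB0; exact: measurableT_comp. Qed.

Lemma density_excess_le_gap : density_excess <= density_gap.
Proof.
rewrite /density_gap (fubini_tonelli2_EFin P P _ mgap (fun z => maxr0_ge0 _)).
apply: ge0_le_integral => //.
- by move=> y _; rewrite lee_fin maxr0_ge0.
- exact/measurable_EFinP.
- exact: measurable_integral_fst_EFin _ mgap (fun z => maxr0_ge0 _).
move=> y _ /=.
(* Jensen: (L y - 1)^+ = (L y - E L)^+ <= E (L y - L x)^+. *)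
have I_ge0 : 0 <= \int[P]_x (Num.max (L y - L x) 0)%:E.
  by apply: integral_ge0 => x _; rewrite lee_fin maxr0_ge0.
have : (L y)%:E <= \int[P]_x (Num.max (L y - L x) 0)%:E + 1.
  rewrite -integral_L -[X in X <= _](integral_cst_probability (L y)%:E).
  apply: (ge0_le_integralD P measurableT) => //.
  - by apply: measurable_maxrB0 => //; exact: measurable_cst.
  - by move=> x; exact: maxr0_ge0.
  - by move=> x _; exact: le_maxrB0_addr.
by rewrite EFin_max ge_max I_ge0 andbT EFinB leeBlDr.
Qed.

Lemma density_gap_le_excess : density_gap <= density_excess + density_excess.
Proof.
have mL1_snd : measurable_fun setT (fun z : T * T => Num.max (L z.2 - 1) 0)%R.
  exact: measurableT_comp mL1 measurable_snd.
have m1L_fst : measurable_fun setT (fun z : T * T => Num.max (1 - L z.1) 0)%R.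
  exact: measurableT_comp m1L measurable_fst.
apply: le_trans (ge0_le_integralD (P \x P) measurableT mgap mL1_snd m1L_fst _ _ _ _) _.
- by move=> z; exact: maxr0_ge0.
- by move=> z; exact: maxr0_ge0.
- by move=> z; exact: maxr0_ge0.
- by move=> z _; exact: maxrB0_le_add.
rewrite (fubini_tonelli1_EFin P P _ mL1_snd (fun z => maxr0_ge0 _)).
rewrite (fubini_tonelli2_EFin P P _ m1L_fst (fun z => maxr0_ge0 _)) /=.
by rewrite !integral_cst_probability -density_excess_deficit.
Qed.

Section atomless.
Hypothesis L_atomless : forall r, P (L @^-1` [set r]) = 0.

Let lt_pairs := [set z : T * T | (L z.1 < L z.2)%R].
Let gt_pairs := [set z : T * T | (L z.2 < L z.1)%R].

Let mem_lt_pairs z : (z \in lt_pairs) = (L z.1 < L z.2)%R.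
Proof. by rewrite mem_setE. Qed.

Let mem_gt_pairs z : (z \in gt_pairs) = (L z.2 < L z.1)%R.
Proof. by rewrite mem_setE. Qed.

Let mL_fst : measurable_fun setT (fun z : T * T => L z.1).
Proof. exact: measurableT_comp mL measurable_fst. Qed.

Let mL_snd : measurable_fun setT (fun z : T * T => L z.2).
Proof. exact: measurableT_comp mL measurable_snd. Qed.

Let m_lt : measurable lt_pairs.
Proof. exact: measurable_set_ltr. Qed.

Let m_gt : measurable gt_pairs.
Proof. exact: measurable_set_ltr. Qed.

Let indic_mulr_measurable {A : set (T * T)} {f : T * T -> R} :
  measurable A -> measurable_fun setT f -> measurable_fun setT (fun z => \1_A z * f z)%R.
Proof. by move=> mA mf; apply: measurable_funM => //; exact: measurable_indic. Qed.

Let indic_mulL1_ge0 (A : set (T * T)) z : (0 <= \1_A z * L z.1)%R.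
Proof. by rewrite mulr_ge0 // indicE ler0n. Qed.

Let indic_mulL2_ge0 (A : set (T * T)) z : (0 <= \1_A z * L z.2)%R.
Proof. by rewrite mulr_ge0 // indicE ler0n. Qed.

Lemma integral_lt_snd_gap :
  \int[P \x P]_z (\1_lt_pairs z * L z.2)%:E =
  \int[P \x P]_z (\1_lt_pairs z * L z.1)%:E + density_gap.
Proof.
rewrite /density_gap -ge0_integralD_EFin //.
- apply: eq_integral => z _; congr EFin.
  by rewrite maxrB0E indicE mem_setE; ring.
- exact: indic_mulr_measurable.
- by move=> z; exact: maxr0_ge0.
Qed.

Lemma integral_lt_snd_swap :
  \int[P \x P]_z (\1_lt_pairs z * L z.2)%:E =
  \int[P \x P]_z (\1_gt_pairs z * L z.1)%:E.
Proof.
rewrite (fubini_tonelli2_EFin P P _ (indic_mulr_measurable m_lt mL_snd)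
  (indic_mulL2_ge0 _)).
rewrite (fubini_tonelli1_EFin P P _ (indic_mulr_measurable m_gt mL_fst)
  (indic_mulL1_ge0 _)).
by apply: eq_integral => y _; apply: eq_integral => x _; rewrite !indicE !mem_setE.
Qed.

(* Pairs with L z.1 = L z.2 are null since the law of L has no atoms. *)
Lemma integral_neq_fst :
  \int[P \x P]_z (\1_lt_pairs z * L z.1)%:E +
  \int[P \x P]_z (\1_gt_pairs z * L z.1)%:E = 1.
Proof.
have mne : measurable_fun setT
    (fun z => \1_lt_pairs z * L z.1 + \1_gt_pairs z * L z.1)%R.
  by apply: measurable_funD; exact: indic_mulr_measurable.
rewrite -ge0_integralD_EFin //; first last.
- exact: indic_mulr_measurable.
- exact: indic_mulr_measurable.
rewrite (fubini_tonelli1_EFin P P _ mne); last by move=> z; rewrite addr_ge0.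
rewrite -integral_L; apply: eq_integral => x _.
have mLx : measurable (L @^-1` [set L x]).
  by rewrite -[X in measurable X]setTI; exact: mL.
transitivity (\int[P]_y ((L x)%:E * (\1_(~` (L @^-1` [set L x])) y)%:E)).
  apply: eq_integral => y _; rewrite -EFinM; congr EFin.
  rewrite !indicE mem_lt_pairs mem_gt_pairs in_setC.
  have -> : (y \in L @^-1` [set L x]) = (L y == L x).
    by apply/idP/eqP => [/set_mem //|]; exact: mem_set.
  by rewrite /=; case: (ltgtP (L x) (L y)) => [h|h|->]; rewrite ?eqxx ?gt_eqF ?lt_eqF //=;
    ring.
have mC : measurable (~` (L @^-1` [set L x])) by exact: measurableC.
rewrite ge0_integralZl //; last by rewrite lee_fin.
- have PC : P (~` (L @^-1` [set L x])) = 1.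
    by rewrite (probability_setC P mLx) L_atomless sube0.
  by rewrite integral_indic // setIT -[RHS]mule1; congr (_ * _); exact: PC.
- by apply/measurable_EFinP; exact: measurable_indic.
Qed.

Lemma integral_lt_snd_half :
  \int[P \x P]_z (\1_lt_pairs z * L z.2)%:E - 2^-1%:E = 2^-1%:E * density_gap.
Proof.
have := integral_neq_fst; rewrite -integral_lt_snd_swap !integral_lt_snd_gap.
have q_ge0 : 0 <= \int[P \x P]_z (\1_lt_pairs z * L z.1)%:E.
  by apply: integral_ge0 => z _; rewrite lee_fin.
have G_ge0 : 0 <= density_gap.
  by apply: integral_ge0 => z _; rewrite lee_fin maxr0_ge0.
move: (\int[P \x P]_z _) density_gap q_ge0 G_ge0 => [q||] [g||] //= _ _.
rewrite -!EFinD -EFinM => -[qqg]; congr EFin; lra.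
Qed.

End atomless.

End probability_density.

Section radon_nikodym_density.
Context {d} {T : measurableType d} {R : realType}.
Variables (PX PY : probability T R) (L : T -> R).
Hypotheses (mL : measurable_fun setT L) (L_ge0 : forall x, (0 <= L x)%R)
  (PY_density : forall A, measurable A -> PY A = \int[PX]_(x in A) (L x)%:E).

Let integral_L : \int[PX]_x (L x)%:E = 1.
Proof. by rewrite -PY_density //; exact: probability_setT. Qed.

Lemma product_measure_density (A : set (T * T)) : measurable A ->
  (PX \x PY) A = \int[PX \x PX]_z (\1_A z * L z.2)%:E.
Proof.
move=> mA; rewrite fubini_tonelli1_EFin; first last.
- by move=> z; rewrite mulr_ge0 // indicE ler0n.
- apply: measurable_funM; first exact: measurable_indic.
  exact: measurableT_comp mL measurable_snd.
rewrite /product_measure1 /=; apply: eq_integral => x _.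
rewrite PY_density; last exact: measurable_xsection.
rewrite integral_mkcond; apply: eq_integral => y _.
by rewrite patchE mem_xsection indicE; case: ifP; rewrite ?mul1r ?mul0r.
Qed.

Let integral_one (B : set T) : measurable B -> \int[PX]_(x in B) 1 = PX B.
Proof. by move=> mB; rewrite integral_cst // mul1e. Qed.

Lemma measure_dev_le_density_excess (B : set T) : measurable B ->
  `|PY B - PX B| <= density_excess PX L.
Proof.
move=> mB.
have PY_le : PY B <= PX B + density_excess PX L.
  rewrite PY_density // -integral_one //.
  apply: (ge0_le_integralD PX mB) => //.
  - exact/measurable_maxrB0/measurable_cst.
  - by move=> x; exact: maxr0_ge0.
  - by move=> x _; rewrite addrC le_maxrB0_addr.
have PX_le : PX B <= PY B + density_excess PX L.
  rewrite (density_excess_deficit _ _ mL) // PY_density // -integral_one //.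
  apply: (ge0_le_integralD PX mB) => //.
  - exact/measurable_maxrB0/mL/measurable_cst.
  - by move=> x; exact: maxr0_ge0.
  - by move=> x _; rewrite addrC le_maxrB0_addr.
move: PY_le PX_le (density_excess_fin_num _ _ mL L_ge0 integral_L).
have [x ->] : exists x, PX B = x%:E.
  by exists (fine (PX B)); rewrite fineK // fin_num_measure.
have [y ->] : exists y, PY B = y%:E.
  by exists (fine (PY B)); rewrite fineK // fin_num_measure.
case: (density_excess PX L) => [D||] //=.
rewrite -!EFinD !lee_fin => PY_le PX_le _.
by rewrite ler_norml; apply/andP; split; lra.
Qed.

Let measurable_gt1 : measurable [set x | (1 < L x)%R].
Proof. exact: (measurable_set_ltr (fun=> 1%R) L (measurable_cst _) mL). Qed.

Lemma measure_dev_density_excess :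
  PY [set x | (1 < L x)%R] - PX [set x | (1 < L x)%R] = density_excess PX L.
Proof.
set B := [set x | (1 < L x)%R].
have excess_on_B : density_excess PX L = \int[PX]_(x in B) (Num.max (L x - 1) 0)%:E.
  rewrite integral_mkcond; apply: eq_integral => x _; rewrite patchE.
  case: ifPn => [//|xNB]; congr EFin; apply: max_r.
  by rewrite subr_le0 leNgt; apply: contra xNB => ?; exact: mem_set.
have PY_B : PY B = \int[PX]_(x in B) (Num.max (L x - 1) 0)%:E + PX B.
  rewrite PY_density // -integral_one // -ge0_integralD_EFin //.
  - apply: eq_integral => x /set_mem Bx; congr EFin.
    by rewrite max_l ?subrK // subr_ge0 ltW.
  - exact/measurable_maxrB0/measurable_cst.
  - by move=> x; exact: maxr0_ge0.
by rewrite PY_B -excess_on_B addeK // fin_num_measure.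
Qed.

Lemma dtv_density_excess : dtv PX PY = density_excess PX L.
Proof.
apply/eqP; rewrite eq_le; apply/andP; split.
  by apply: ge_ereal_sup => _ [B mB <-]; exact: measure_dev_le_density_excess.
apply: ereal_sup_ubound; exists [set x | (1 < L x)%R] => //.
rewrite measure_dev_density_excess gee0_abs //.
exact: (density_excess_ge0 PX L).
Qed.

End radon_nikodym_density.

Theorem proposition1 (d : measure_display) (T : measurableType d) (R : realType)
  (PX PY : probability T R) (L : T -> R)
  (hac : PY `<< PX)
  (hLmeas : measurable_fun setT L)
  (hLge0 : forall z, (0 <= L z)%R)
  (hRN : forall A, measurable A -> PY A = \int[PX]_(z in A) (L z)%:E)
  (hcont : forall r : R, PX (L @^-1` [set r]) = 0) :
  (2^-1)%:E * dtv PX PY <= (PX \x PY) [set zz | (L zz.1 < L zz.2)%R] - (2^-1)%:E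
  /\ (PX \x PY) [set zz | (L zz.1 < L zz.2)%R] - (2^-1)%:E <= dtv PX PY.
Proof.
have integral_L : \int[PX]_x (L x)%:E = 1 by rewrite -hRN //; exact: probability_setT.
rewrite (product_measure_density _ _ _ hLmeas hLge0 hRN); last first.
  by apply: measurable_set_ltr; exact: measurableT_comp.
rewrite (integral_lt_snd_half _ _ hLmeas hLge0 integral_L hcont).
rewrite (dtv_density_excess _ _ _ hLmeas hLge0 hRN).
have := density_excess_le_gap _ _ hLmeas hLge0 integral_L.
have := density_gap_le_excess _ _ hLmeas hLge0 integral_L.
have := density_excess_fin_num _ _ hLmeas hLge0 integral_L.
move: (density_excess PX L) (density_gap PX L) => [D||] [G||] //= _.
by rewrite -!EFinM -EFinD !lee_fin => ? ?; split; lra.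
Qed.
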